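(* Let $A$ be a commutative ring, $a\in A$ a non-zero-divisor, and $\mathcal D=\partial_z-a:A[z]\to A[z]$, $h\mapsto h'-ah$. Let $f=b_0+b_1z+\cdots+b_dz^d\in A[z]$ with $b_0,\ldots,b_d\in A$. (i) If $f\in\mathrm{Im}\,\mathcal D$, then $b_d\equiv 0\pmod{a}$ and $$d!\,b_d+(d-1)!\,b_{d-1}a+(d-2)!\,b_{d-2}a^2+\cdots+0!\,b_0a^d\equiv 0\pmod{a^{d+1}}.$$ (ii) Conversely, suppose $A$ is either a $\mathbb Q$-algebra, or an $\mathbb F_p$-algebra with $d<p$. If $f$ satisfies the congruence $\sum_{j=0}^{d}(d-j)!\,b_{d-j}a^{j}\equiv 0\pmod{a^{d+1}}$, then $f\in\mathrm{Im}\,\mathcal D$.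
   Context: Congruences are in $A$: $x\equiv 0\pmod{a^k}$ means $x\in Aa^k$. *)

From HB Require Import structures.
From mathcomp Require Import all_boot all_order all_algebra.
Set Implicit Arguments. Unset Strict Implicit. Unset Printing Implicit Defensive.
Import Order.TTheory GRing.Theory Num.Theory.
Local Open Scope ring_scope.

Definition non_zero_divisor (A : comNzRingType) (a : A) : Prop :=
  forall x : A, a * x = 0 -> x = 0.

Definition Dop (A : comNzRingType) (a : A) (h : {poly A}) : {poly A} :=
  h^`() - a%:P * h.

Definition cong0 (A : comNzRingType) (a : A) (k : nat) (x : A) : Prop :=
  exists c : A, x = c * a ^+ k.

(* A is a Q-algebra: every positive integer is invertible in A
   (equivalently, the unique ring map Z -> A extends to Q). *)
Definition is_Qalgebra (A : comNzRingType) : Prop :=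
  forall n : nat, exists y : A, y * (n.+1)%:R = 1.

Definition is_Fp_algebra (A : comNzRingType) (p : nat) : Prop :=
  prime p /\ (p%:R : A) = 0.

From HB Require Import structures.
From mathcomp Require Import all_boot all_order all_algebra ring.
Import GRing.Theory.
Local Open Scope ring_scope.

(* Writing f = D h coefficientwise, f_k = (k+1) h_(k+1) - a h_k, the weighted
   sum S = sum_k k! f_k a^(d-k) telescopes to d! (f_d + a h_d) - h_0 a^(d+1).
   If deg h <= d (forced when a is a non-zero-divisor, since then D preserves
   degrees) the first term vanishes and S is divisible by a^(d+1).  Conversely,
   when d! is invertible the recursion h_(k+1) = (f_k + a h_k) / (k+1), started
   at h_0 = -c where S = c a^(d+1), solves all equations f_k = (D h)_k for k < d,
   and the telescoped identity then forces the last one, f_d = - a h_d. *)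

Definition fact_moment {A : comNzRingType} (a : A) (d : nat) (f : {poly A}) : A :=
  \sum_(j < d.+1) ((d - j)`!)%:R * f`_(d - j) * a ^+ j.

Lemma fact_moment_telescope {A : comNzRingType} (a : A) (d : nat) (f : {poly A})
    (g : nat -> A) :
    (forall k, (k < d)%N -> f`_k = k.+1%:R * g k.+1 - a * g k) ->
  fact_moment a d f = (d`!)%:R * (f`_d + a * g d) - g 0%N * a ^+ d.+1.
Proof.
move=> Df; rewrite /fact_moment.
rewrite -(big_mkord xpredT (fun j => ((d - j)`!)%:R * f`_(d - j) * a ^+ j)).
rewrite big_nat_rev /= big_nat_recr //= add0n subSS subnn subn0 expr0 mulr1.
have -> : \sum_(0 <= k < d) ((d - (d.+1 - k.+1))`!)%:R * f`_(d - (d.+1 - k.+1))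
                             * a ^+ (d.+1 - k.+1)
    = \sum_(0 <= k < d) ((k.+1`!)%:R * g k.+1 * a ^+ (d.+1 - k.+1)
                         - (k`!)%:R * g k * a ^+ (d.+1 - k)).
  apply: eq_big_nat => k /andP[_ ltkd].
  rewrite subSS subKn ?(ltnW ltkd) // Df // subSn ?(ltnW ltkd) // exprS factS natrM.
  by ring.
rewrite (telescope_sumr (fun k => (k`!)%:R * g k * a ^+ (d.+1 - k))) //.
by rewrite subSn // subnn subn0 fact0 expr1; ring.
Qed.

Lemma coef_Dop {A : comNzRingType} (a : A) (h : {poly A}) (k : nat) :
  (Dop a h)`_k = k.+1%:R * h`_k.+1 - a * h`_k.
Proof. by rewrite /Dop coefB coef_deriv coefCM mulr_natl. Qed.

Lemma size_Dop {A : comNzRingType} (a : A) (h : {poly A}) :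
  non_zero_divisor a -> size (Dop a h) = size h.
Proof.
move=> nzd_a; have [-> | h_neq0] := eqVneq h 0.
  by rewrite /Dop deriv0 mulr0 subr0.
have lreg_a : GRing.lreg a.
  by move=> x y /eqP; rewrite -subr_eq0 -mulrBr => /eqP /nzd_a /eqP; rewrite subr_eq0 => /eqP.
rewrite /Dop addrC mul_polyC size_addl size_polyN lreg_size //.
exact: lt_size_deriv.
Qed.

Lemma Dop_image_fact_moment {A : comNzRingType} (a : A) (d : nat) (h : {poly A}) :
    non_zero_divisor a -> (size (Dop a h) <= d.+1)%N ->
  cong0 a 1 (Dop a h)`_d /\ cong0 a d.+1 (fact_moment a d (Dop a h)).
Proof.
move=> nzd_a; rewrite size_Dop // => size_h.
have top : (Dop a h)`_d = - h`_d * a.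
  by rewrite coef_Dop [h`_d.+1]nth_default // mulr0 sub0r mulrC mulNr.
split; first by exists (- h`_d); rewrite top expr1.
exists (- h`_0); rewrite (fact_moment_telescope _ _ _ _ (fun k _ => coef_Dop a h k)).
by rewrite top mulNr [a * _]mulrC addNr mulr0 sub0r mulNr.
Qed.

Lemma coprime_fact {p n : nat} : prime p -> (n < p)%N -> coprime p n`!.
Proof.
move=> p_pr; elim: n => [|n IHn] ltnp; first by rewrite fact0 coprimen1.
rewrite factS coprimeMr IHn ?(ltnW ltnp) // andbT prime_coprime //.
by apply/negP => /(dvdn_leq (ltn0Sn n)); rewrite leqNgt ltnp.
Qed.

Lemma natr_invertible_coprime {A : comNzRingType} {p m : nat} :
  (p%:R : A) = 0 -> coprime p m -> exists y : A, y * m%:R = 1.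
Proof.
case: p => [|p] p0 co_pm.
  by exists 1; rewrite /coprime gcd0n in co_pm; rewrite (eqP co_pm) mulr1.
have [x _] := Bezoutl m (ltn0Sn p).
rewrite (eqP co_pm) => /dvdnP [q Dq].
have : ((1 + x * m)%N%:R : A) = 0 by rewrite Dq natrM p0 mulr0.
rewrite natrD natrM => /eqP; rewrite addrC addr_eq0 => /eqP Dxm.
by exists (- x%:R); rewrite mulNr Dxm opprK.
Qed.

Lemma fact_invertible {A : comNzRingType} {d : nat} :
    is_Qalgebra A \/ (exists p : nat, is_Fp_algebra A p /\ (d < p)%N) ->
  exists y : A, y * (d`!)%:R = 1.
Proof.
case=> [QA | [p [[p_pr p0] ltdp]]]; last first.
  exact: natr_invertible_coprime p0 (coprime_fact p_pr ltdp).
by have := QA (d`!).-1; rewrite prednK ?fact_gt0.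
Qed.

Section DopPreimage.

Context {A : comNzRingType} {a : A} {d : nat} {f : {poly A}} {y : A}.
Hypothesis y_inv : y * (d`!)%:R = 1.

Definition inv_succ (k : nat) : A := y * (d`! %/ k.+1)%:R.

Lemma inv_succK (k : nat) : (k < d)%N -> inv_succ k * k.+1%:R = 1.
Proof. by move=> ltkd; rewrite -mulrA -natrM divnK ?dvdn_fact. Qed.

Fixpoint Dop_preimage_coef (c : A) (k : nat) : A :=
  if k is k'.+1 then inv_succ k' * (f`_k' + a * Dop_preimage_coef c k') else - c.

Lemma Dop_preimage_coefE (c : A) (k : nat) : (k < d)%N ->
  f`_k = k.+1%:R * Dop_preimage_coef c k.+1 - a * Dop_preimage_coef c k.
Proof. by move=> ltkd; rewrite /= mulrA [_ * inv_succ k]mulrC inv_succK // mul1r addrK. Qed.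

Lemma Dop_surjective_on_moment_multiples (c : A) :
    (size f <= d.+1)%N -> fact_moment a d f = c * a ^+ d.+1 ->
  exists h : {poly A}, f = Dop a h.
Proof.
move=> size_f moment_f; set g := Dop_preimage_coef c.
have top_eq0 : f`_d + a * g d = 0.
  have : (d`!)%:R * (f`_d + a * g d) = 0.
    move: moment_f.
    rewrite (fact_moment_telescope _ _ _ _ (Dop_preimage_coefE c)) /= mulNr opprK.
    by move/(congr1 (fun x => x - c * a ^+ d.+1)); rewrite addrK subrr.
  by move/(congr1 (GRing.mul y)); rewrite mulrA y_inv mul1r mulr0.
exists (\poly_(i < d.+1) g i); apply/polyP => k; rewrite coef_Dop !coef_poly.
case: (ltngtP k d) => [ltkd | ltdk | ->].
- by rewrite ltnS ltkd ltnW // (Dop_preimage_coefE c).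
- rewrite ltnNge ltnW // ltnS leqNgt ltdk /= !mulr0 subr0.
  by apply: nth_default; apply: leq_trans size_f ltdk.
- by rewrite ltnn ltnSn mulr0 -[f`_d](addrK (a * g d)) top_eq0.
Qed.

End DopPreimage.

Theorem proposition2p10 (A : comNzRingType) (a : A)
  (ha : non_zero_divisor a) (d : nat) (f : {poly A})
  (hf : (size f <= d.+1)%N) :
  ((exists h : {poly A}, f = Dop a h) ->
     cong0 a 1 f`_d /\
     cong0 a d.+1 (\sum_(j < d.+1) ((d - j)`!)%:R * f`_(d - j) * a ^+ j))
  /\
  ((is_Qalgebra A \/ (exists p : nat, is_Fp_algebra A p /\ (d < p)%N)) ->
     cong0 a d.+1 (\sum_(j < d.+1) ((d - j)`!)%:R * f`_(d - j) * a ^+ j) ->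
     exists h : {poly A}, f = Dop a h).
Proof.
split=> [[h Df] | char_A [c moment_f]].
  by rewrite Df in hf *; exact: Dop_image_fact_moment.
have [y y_inv] := fact_invertible char_A.
exact: Dop_surjective_on_moment_multiples y_inv c hf moment_f.
Qed.
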